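(* Let $(X,\mathscr{L}_X)$ and $(Y,\mathscr{L}_Y)$ be weak Lipschitz spaces and let $f: X\to Y$ be a weak Lipschitz map. Then $f$ is continuous with respect to the topologies $\widehat{\tau}(\mathscr{L}_X)$ on $X$ and $\widehat{\tau}(\mathscr{L}_Y)$ on $Y$.
   Context: A weak pseudo-metric on a set $Z$ is a symmetric map $d: Z\times Z\to[0,\infty)$ satisfying $d(z_1,z_2)\le d(z_1,z)+d(z,z_2)$ for all $z,z_1,z_2$ and vanishing at at least one point of the diagonal (not necessarily on the whole diagonal). A weak Lipschitz structure for $Z$ is a non-empty family $\mathscr{L}$ of weak pseudo-metrics on $Z$ such that (L1) if $d$ is a weak pseudo-metric with $d\le d_1$ for some $d_1\in\mathscr{L}$ then $d\in\mathscr{L}$; (L2) $d\in\mathscr{L}$ implies $\alpha d\in\mathscr{L}$ for all real $\alpha>0$; (L3) $d_1,d_2\in\mathscr{L}$ imply $d_1\vee d_2\in\mathscr{L}$; the pair $(Z,\mathscr{L})$ is a weak Lipschitz space. $\widehat{\tau}(\mathscr{L})$ is the topology on $Z$ generated (as a subbase) by the sets $U_{d,\varepsilon}(z)=\{\xi\in Z: d(\xi,z)<\varepsilon\}$ with $d\in\mathscr{L}$, $z\in Z$, and real $\varepsilon>d(z,z)$. A map $f:X\to Y$ is a weak Lipschitz map if for every $d_Y\in\mathscr{L}_Y$ there is $d_X\in\mathscr{L}_X$ with $d_Y(f(x_1),f(x_2))\le d_X(x_1,x_2)$ for all $x_1,x_2\in X$. *)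

From Stdlib Require Import Reals.
Open Scope R_scope.

Definition weak_pseudo_metric {Z : Type} (d : Z -> Z -> R) : Prop :=
  (forall z1 z2, 0 <= d z1 z2) /\
  (forall z1 z2, d z1 z2 = d z2 z1) /\
  (forall z z1 z2, d z1 z2 <= d z1 z + d z z2) /\
  (exists z, d z z = 0).

Definition weak_lipschitz_structure {Z : Type} (L : (Z -> Z -> R) -> Prop) : Prop :=
  (exists d, L d) /\
  (forall d, L d -> weak_pseudo_metric d) /\
  (forall d d1, weak_pseudo_metric d -> L d1 ->
     (forall x y, d x y <= d1 x y) -> L d) /\
  (forall d (a : R), L d -> 0 < a -> L (fun x y => a * d x y)) /\
  (forall d1 d2, L d1 -> L d2 -> L (fun x y => Rmax (d1 x y) (d2 x y))).

Definition U_ball {Z : Type} (d : Z -> Z -> R) (eps : R) (z : Z) : Z -> Prop :=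
  fun xi => d xi z < eps.

Definition hat_subbase {Z : Type} (L : (Z -> Z -> R) -> Prop) (U : Z -> Prop) : Prop :=
  exists d eps z, L d /\ d z z < eps /\ (forall xi, U xi <-> U_ball d eps z xi).

Inductive generated_open {Z : Type} (S : (Z -> Prop) -> Prop) : (Z -> Prop) -> Prop :=
  | go_sub : forall U, S U -> generated_open S U
  | go_full : forall U, (forall x, U x) -> generated_open S U
  | go_inter : forall U V W, generated_open S U -> generated_open S V ->
      (forall x, W x <-> (U x /\ V x)) -> generated_open S W
  | go_union : forall (I : Type) (F : I -> Z -> Prop) W,
      (forall i, generated_open S (F i)) ->
      (forall x, W x <-> exists i, F i x) -> generated_open S W.

Definition hat_open {Z : Type} (L : (Z -> Z -> R) -> Prop) (U : Z -> Prop) : Prop :=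
  generated_open (hat_subbase L) U.

Definition weak_lipschitz_map {X Y : Type} (LX : (X -> X -> R) -> Prop)
  (LY : (Y -> Y -> R) -> Prop) (f : X -> Y) : Prop :=
  forall dY, LY dY -> exists dX, LX dX /\
    forall x1 x2, dY (f x1) (f x2) <= dX x1 x2.

Definition continuous_hat {X Y : Type} (LX : (X -> X -> R) -> Prop)
  (LY : (Y -> Y -> R) -> Prop) (f : X -> Y) : Prop :=
  forall V : Y -> Prop, hat_open LY V -> hat_open LX (fun x => V (f x)).

(** The subbasic set {y | dY y y0 < eps} pulls back under f to the sublevel set
    {x | phi x < eps} of phi x := dY (f x) y0.  By the reverse triangle inequality
    |phi a - phi b| <= dY (f a) (f b) <= dX a b for some dX in LX, so by (L1) the
    weak pseudo-metric |phi a - phi b| itself lies in LX; every sublevel set of such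
    a phi is a union of its balls, hence open.  (The balls of dX itself would not
    do: dX x x may be positive, so they can be too large; |phi a - phi b| vanishes
    on the whole diagonal.)  Preimages commute with the operations generating a
    topology from a subbase, which gives continuity. *)

From Stdlib Require Import Reals Lra.
Open Scope R_scope.

Lemma generated_open_preimage {X Y : Type}
  (SX : (X -> Prop) -> Prop) (SY : (Y -> Prop) -> Prop) (f : X -> Y) :
  (forall V, SY V -> generated_open SX (fun x => V (f x))) ->
  forall V, generated_open SY V -> generated_open SX (fun x => V (f x)).
Proof.
  intros Hsub V HV. induction HV as [V HV | V HV | U V W _ IHU _ IHV HW
                                     | I F W _ IHF HW].
  - exact (Hsub V HV).
  - exact (go_full _ _ (fun x => HV (f x))).
  - apply (go_inter _ _ _ _ IHU IHV). intros x. apply HW.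
  - apply (go_union _ I (fun i x => F i (f x))); [exact IHF |].
    intros x. apply HW.
Qed.

Lemma abs_diff_weak_pseudo_metric {Z : Type} (phi : Z -> R) (z0 : Z) :
  weak_pseudo_metric (fun a b => Rabs (phi a - phi b)).
Proof.
  split; [| split; [| split]].
  - intros a b. apply Rabs_pos.
  - intros a b. apply Rabs_minus_sym.
  - intros z a b.
    replace (phi a - phi b) with ((phi a - phi z) + (phi z - phi b)) by ring.
    apply Rabs_triang.
  - exists z0. rewrite Rminus_diag. apply Rabs_R0.
Qed.

Lemma weak_pseudo_metric_reverse_triangle {Z : Type} (d : Z -> Z -> R) :
  weak_pseudo_metric d ->
  forall a b z, Rabs (d a z - d b z) <= d a b.
Proof.
  intros [_ [Hsym [Htri _]]] a b z.
  apply Rabs_le.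
  pose proof (Htri b a z). pose proof (Htri a b z).
  rewrite (Hsym b a) in *. lra.
Qed.

Lemma sublevel_hat_open {Z : Type} (L : (Z -> Z -> R) -> Prop)
  (phi : Z -> R) (eps : R) (W : Z -> Prop) :
  L (fun a b => Rabs (phi a - phi b)) ->
  (forall z, W z <-> phi z < eps) -> hat_open L W.
Proof.
  intros Hphi HW.
  set (dphi := fun a b => Rabs (phi a - phi b)).
  assert (Hdiag : forall z, dphi z z = 0).
  { intros z. unfold dphi. rewrite Rminus_diag. apply Rabs_R0. }
  apply (go_union _ {z0 : Z | phi z0 < eps}
           (fun p => U_ball dphi (eps - phi (proj1_sig p)) (proj1_sig p))).
  - intros [z0 Hz0]. apply go_sub. simpl.
    exists dphi, (eps - phi z0), z0.
    split; [exact Hphi | split; [rewrite Hdiag; lra | tauto]].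
  - intros z. rewrite HW. unfold U_ball. split.
    + intros Hz. exists (exist _ z Hz). simpl. rewrite Hdiag. lra.
    + intros [[z0 Hz0] Hball]. simpl in Hball.
      pose proof (Rle_abs (phi z - phi z0)). unfold dphi in Hball. lra.
Qed.

Lemma weak_lipschitz_map_subbase_preimage (X Y : Type)
  (LX : (X -> X -> R) -> Prop) (LY : (Y -> Y -> R) -> Prop)
  (HX : weak_lipschitz_structure LX) (HY : weak_lipschitz_structure LY)
  (f : X -> Y) (Hf : weak_lipschitz_map LX LY f) (V : Y -> Prop) :
  hat_subbase LY V -> hat_open LX (fun x => V (f x)).
Proof.
  intros [dY [eps [y [HdY [_ HV]]]]].
  destruct HX as [_ [HXwpm [HXdown _]]].
  destruct HY as [_ [HYwpm _]].
  destruct (Hf dY HdY) as [dX [HdX HdXdom]].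
  destruct (HXwpm dX HdX) as [_ [_ [_ [x0 _]]]].
  apply (sublevel_hat_open LX (fun x => dY (f x) y) eps).
  - apply (HXdown _ dX (abs_diff_weak_pseudo_metric _ x0) HdX).
    intros a b. eapply Rle_trans; [| apply HdXdom].
    apply weak_pseudo_metric_reverse_triangle, HYwpm, HdY.
  - intros x. apply HV.
Qed.

Theorem theorem4p5 (X Y : Type)
  (LX : (X -> X -> R) -> Prop) (LY : (Y -> Y -> R) -> Prop)
  (HX : weak_lipschitz_structure LX) (HY : weak_lipschitz_structure LY)
  (f : X -> Y) (Hf : weak_lipschitz_map LX LY f) :
  continuous_hat LX LY f.
Proof.
  intros V HV.
  apply (generated_open_preimage (hat_subbase LX) (hat_subbase LY) f); [| exact HV].
  exact (weak_lipschitz_map_subbase_preimage X Y LX LY HX HY f Hf).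
Qed.
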